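(* Let $L$ be one of the logics $\mathsf{MN}$, $\mathsf{MNF}$, $\mathsf{MNP}$, $\mathsf{MND}$, $\mathsf{MNPF}$, $\mathsf{MNDF}$. Then for any modal formula $A$ the following are equivalent: (1) $L\vdash A$; (2) $A$ is valid in all $L$-frames; (3) $A$ is valid in all finite $L$-frames.
   Context: The modal language has countably many propositional variables, $\bot$, $\to$ and $\Box$, with the other connectives as abbreviations. $\mathsf{MN}$ is the logic whose axioms are all propositional tautologies in this language and whose rules are modus ponens, necessitation ($A / \Box A$) and monotonicity RM ($A\to B / \Box A\to\Box B$). $\mathsf{MNP}$ is $\mathsf{MN}$ plus the axiom scheme $\neg\Box\bot$; $\mathsf{MND}$ is $\mathsf{MN}$ plus the scheme $\neg(\Box A\land\Box\neg A)$; $\mathsf{MNF}$, $\mathsf{MNPF}$, $\mathsf{MNDF}$ are obtained from $\mathsf{MN}$, $\mathsf{MNP}$, $\mathsf{MND}$ respectively by adding the scheme $\Box A\to\Box\Box A$. An $\mathsf{MN}$-frame is a pair $(W,\prec)$ where $W$ is a non-empty set and $\prec$ is a relation between elements of $W$ and non-empty subsets of $W$ such that $x\prec V$ and $V\subseteq U\subseteq W$ imply $x\prec U$. A satisfaction relation $\Vdash$ on it obeys the usual Boolean clauses and: $x\Vdash\Box A$ iff for every $V$ with $x\prec V$ some $y\in V$ has $y\Vdash A$. $A$ is valid in a frame if it holds at every point under every satisfaction relation. The frame is transitive if whenever $x\prec V$ and $y\prec U_y$ for each $y\in V$, then $x\prec\bigcup_{y\in V}U_y$; it is an $\mathsf{MNP}$-frame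 if every $x$ has some $V$ with $x\prec V$; it is an $\mathsf{MND}$-frame if for all $x\in W$, $V\subseteq W$: $x\prec V$ or $x\prec W\setminus V$. The $\mathsf{MN}$-, $\mathsf{MNP}$-, $\mathsf{MND}$-frames are as just defined; $\mathsf{MNF}$-, $\mathsf{MNPF}$-, $\mathsf{MNDF}$-frames are respectively the transitive $\mathsf{MN}$-, $\mathsf{MNP}$-, $\mathsf{MND}$-frames. A frame is finite if $W$ is finite. *)

From Stdlib Require Import List.

Inductive form : Type :=
| Var : nat -> form
| Bot : form
| Imp : form -> form -> form
| Box : form -> form.

Definition Neg (A : form) : form := Imp A Bot.
Definition Top : form := Neg Bot.
Definition Or (A B : form) : form := Imp (Neg A) B.
Definition And (A B : form) : form := Neg (Imp A (Neg B)).

(* A boolean assignment to the "propositional atoms" of the modal language,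
   i.e. to the propositional variables and to all boxed formulas. *)
Fixpoint beval (v : form -> bool) (A : form) : bool :=
  match A with
  | Var n => v (Var n)
  | Bot => false
  | Imp B C => orb (negb (beval v B)) (beval v C)
  | Box B => v (Box B)
  end.

Definition tautology (A : form) : Prop := forall v : form -> bool, beval v A = true.

Inductive logic : Type := MN | MNP | MND | MNF | MNPF | MNDF.

Definition hasP (L : logic) : bool :=
  match L with MNP | MNPF => true | _ => false end.
Definition hasD (L : logic) : bool :=
  match L with MND | MNDF => true | _ => false end.
Definition hasF (L : logic) : bool :=
  match L with MNF | MNPF | MNDF => true | _ => false end.

Inductive prov (L : logic) : form -> Prop :=
| ax_taut : forall A, tautology A -> prov L A
| ax_P : hasP L = true -> prov L (Neg (Box Bot))
| ax_D : forall A, hasD L = true -> prov L (Neg (And (Box A) (Box (Neg A))))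
| ax_F : forall A, hasF L = true -> prov L (Imp (Box A) (Box (Box A)))
| r_mp : forall A B, prov L (Imp A B) -> prov L A -> prov L B
| r_nec : forall A, prov L A -> prov L (Box A)
| r_rm : forall A B, prov L (Imp A B) -> prov L (Imp (Box A) (Box B)).

Record MNframe := {
  world : Type;
  nbh : world -> (world -> Prop) -> Prop;
  world_nonempty : exists x : world, True;
  nbh_nonempty : forall x V, nbh x V -> exists y, V y;
  nbh_mono : forall x (V U : world -> Prop),
      nbh x V -> (forall y, V y -> U y) -> nbh x U
}.

Fixpoint forces (F : MNframe) (val : nat -> world F -> Prop)
         (x : world F) (A : form) : Prop :=
  match A with
  | Var n => val n x
  | Bot => False
  | Imp B C => forces F val x B -> forces F val x C
  | Box B => forall V, nbh F x V -> exists y, V y /\ forces F val y B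
  end.

Definition valid_in (F : MNframe) (A : form) : Prop :=
  forall (val : nat -> world F -> Prop) (x : world F), forces F val x A.

Definition transitive_frame (F : MNframe) : Prop :=
  forall (x : world F) (V : world F -> Prop) (U : world F -> world F -> Prop),
    nbh F x V -> (forall y, V y -> nbh F y (U y)) ->
    nbh F x (fun z => exists y, V y /\ U y z).

Definition serial_frame (F : MNframe) : Prop :=
  forall x : world F, exists V, nbh F x V.

Definition D_frame (F : MNframe) : Prop :=
  forall (x : world F) (V : world F -> Prop),
    nbh F x V \/ nbh F x (fun z => ~ V z).

Definition is_L_frame (L : logic) (F : MNframe) : Prop :=
  (hasP L = true -> serial_frame F) /\
  (hasD L = true -> D_frame F) /\
  (hasF L = true -> transitive_frame F).

Definition finite_frame (F : MNframe) : Prop :=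
  exists l : list (world F), forall x, In x l.

(* For completeness with
   the finite model property, let A be unprovable and l its subformulas.  The
   worlds of the countermodel are the L-consistent truth assignments to l
   ("atoms"), and an atom G has the neighbourhood X iff X is nonempty and each
   requirement of G is met by a member of X, where the requirements of G are
   the C with Box C in l true at G together with, in the transitive logics,
   the Box C themselves.  Necessitation and RM give the truth lemma, the
   axioms P, D and F give seriality, the D-condition and transitivity, and an
   atom containing Neg A refutes A. *)

From Stdlib Require Import List Bool Classical ClassicalEpsilon
  FunctionalExtensionality ProofIrrelevance.
Import ListNotations.

(** * Soundness *)

Lemma forces_taut F ev x A : tautology A -> forces F ev x A.
Proof.
  intros HA.
  set (v := fun B => if excluded_middle_informative (forces F ev x B)
                     then true else false).
  enough (Hv : forall B, beval v B = true <-> forces F ev x B)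
    by (apply Hv, HA).
  induction B as [n| |B IHB C IHC|B _]; simpl.
  - unfold v; destruct excluded_middle_informative; intuition discriminate.
  - intuition discriminate.
  - rewrite orb_true_iff, negb_true_iff, <- IHB, <- IHC.
    destruct (beval v B); intuition discriminate.
  - unfold v; destruct excluded_middle_informative; intuition discriminate.
Qed.

Lemma forces_P F ev x : serial_frame F -> forces F ev x (Neg (Box Bot)).
Proof.
  intros Hser Hbox; destruct (Hser x) as [V HV].
  now destruct (Hbox V HV) as [y [_ []]].
Qed.

Lemma forces_D F ev x A :
  D_frame F -> forces F ev x (Neg (And (Box A) (Box (Neg A)))).
Proof.
  intros HD Hn; apply Hn; intros HA HnA.
  destruct (HD x (fun z => forces F ev z A)) as [HV|HV].
  - destruct (HnA _ HV) as [y [Hy Hny]]; auto.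
  - destruct (HA _ HV) as [y [Hny Hy]]; auto.
Qed.

Lemma forces_F F ev x A :
  transitive_frame F -> forces F ev x (Imp (Box A) (Box (Box A))).
Proof.
  intros Htr HA V HV; apply NNPP; intro Hno.
  assert (HU : forall y, V y -> nbh F y (fun z => ~ forces F ev z A)).
  { intros y Hy.
    assert (Hny : ~ forces F ev y (Box A)) by (intro; apply Hno; eauto).
    simpl in Hny; apply not_all_ex_not in Hny as [U HU].
    apply imply_to_and in HU as [HyU HnU].
    apply (nbh_mono F y U); auto.
    intros z Hz HzA; apply HnU; eauto. }
  destruct (HA _ (Htr x V _ HV HU)) as [z [[y [_ Hnz]] Hz]].
  contradiction.
Qed.

Lemma soundness L A : prov L A -> forall F, is_L_frame L F -> valid_in F A.
Proof.
  intros HA F [HP [HD HF]].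
  induction HA as [A HA|Hl|A Hl|A Hl|A B _ IHAB _ IHA|A _ IHA|A B _ IHAB];
    intros ev x.
  - now apply forces_taut.
  - now apply forces_P, HP.
  - now apply forces_D, HD.
  - now apply forces_F, HF.
  - exact (IHAB ev x (IHA ev x)).
  - intros V HV; destruct (nbh_nonempty F x V HV) as [y Hy]; eauto.
  - intros HBA V HV; destruct (HBA V HV) as [y [Hy HyA]].
    exists y; split; [exact Hy | exact (IHAB ev y HyA)].
Qed.

(** * Completeness *)

Ltac beval_tauto :=
  intros; simpl in *;
  repeat match goal with
  | |- context [beval ?v ?X] => destruct (beval v X)
  | H : context [beval ?v ?X] |- _ => destruct (beval v X)
  | |- context [?v (Box ?C)] => destruct (v (Box C))
  | H : context [?v (Box ?C)] |- _ => destruct (v (Box C))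
  end;
  simpl in *; try discriminate; auto.

Lemma beval_And v P Q : beval v (And P Q) = beval v P && beval v Q.
Proof. beval_tauto. Qed.

Lemma prov_taut_mp L P Q :
  (forall v, beval v P = true -> beval v Q = true) -> prov L P -> prov L Q.
Proof.
  intros HPQ HP; apply (r_mp L P Q); [|exact HP].
  apply ax_taut; intro v; simpl.
  destruct (beval v P) eqn:E; simpl; auto.
Qed.

Lemma prov_and L P Q : prov L P -> prov L Q -> prov L (And P Q).
Proof.
  intros HP HQ; apply (r_mp L Q); [|exact HQ].
  apply (prov_taut_mp L P); [beval_tauto | exact HP].
Qed.

Lemma prov_Top L : prov L Top.
Proof. now apply ax_taut. Qed.

Definition consistent L P : Prop := ~ prov L (Neg P).

Lemma consistent_sat L P Q :
  consistent L P -> prov L Q -> exists v, beval v P = true /\ beval v Q = true.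
Proof.
  intros HP HQ; apply NNPP; intro Hno; apply HP.
  apply (prov_taut_mp L Q); [|exact HQ].
  intros v Hv; simpl; destruct (beval v P) eqn:E; auto.
  exfalso; eauto.
Qed.

Lemma consistent_weaken L P Q :
  (forall v, beval v P = true -> beval v Q = true) ->
  consistent L P -> consistent L Q.
Proof.
  intros HPQ HP HQ.
  destruct (consistent_sat L P _ HP HQ) as [v [Hv HnQ]].
  simpl in HnQ; rewrite (HPQ v Hv) in HnQ; discriminate.
Qed.

Definition lit (b : bool) (D : form) : form := if b then D else Neg D.

Lemma beval_lit v b D : beval v (lit b D) = true <-> beval v D = b.
Proof. destruct b; beval_tauto; intuition discriminate. Qed.

Lemma consistent_split L P D :
  consistent L P -> exists b, consistent L (And (lit b D) P).
Proof.
  intros HP; destruct (classic (consistent L (And D P))) as [H|H].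
  - now exists true.
  - exists false; intro H'; apply NNPP in H.
    destruct (consistent_sat L P _ HP (prov_and L _ _ H H')) as [v [Hv HvP]].
    revert Hv HvP; beval_tauto.
Qed.

Fixpoint chi (s : form -> bool) (l : list form) : form :=
  match l with
  | [] => Top
  | D :: l' => And (lit (s D) D) (chi s l')
  end.

Definition agrees (v s : form -> bool) (l : list form) : Prop :=
  forall D, In D l -> beval v D = s D.

Lemma beval_chi v s l : beval v (chi s l) = true <-> agrees v s l.
Proof.
  induction l as [|D l IH]; simpl chi.
  - split; [intros _ D []|reflexivity].
  - rewrite beval_And, andb_true_iff, beval_lit, IH.
    split; [intros [HD Hl] E [<-|HE]; auto|].
    intros H; split; [apply H; left | intros E HE; apply H; right]; auto.
Qed.

Definition supported (l : list form) (s : form -> bool) : Prop :=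
  forall D, ~ In D l -> s D = false.

Lemma form_eq_dec (A B : form) : {A = B} + {A <> B}.
Proof. decide equality; apply PeanoNat.Nat.eq_dec. Qed.

Definition upd (s : form -> bool) (D : form) (b : bool) (E : form) : bool :=
  if form_eq_dec E D then b else s E.

Lemma lindenbaum L l P :
  consistent L P -> exists s, supported l s /\ consistent L (And (chi s l) P).
Proof.
  revert P; induction l as [|D l IH]; intros P HP.
  - exists (fun _ => false); split; [now intros D _|].
    revert HP; apply consistent_weaken; beval_tauto.
  - destruct (consistent_split L P D HP) as [b Hb].
    destruct (IH _ Hb) as [s [Hs Hc]].
    exists (upd s D b); split.
    + intros E HE; unfold upd; destruct (form_eq_dec E D) as [->|NE].
      * now destruct HE; left.
      * now apply Hs; intro; apply HE; right.
    + revert Hc; apply consistent_weaken; intros v.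
      rewrite !beval_And, !andb_true_iff, !beval_chi, beval_lit.
      intros [Hl [HD HvP]]; split; [|exact HvP].
      intros E HE; unfold upd; destruct (form_eq_dec E D) as [->|NE]; [exact HD|].
      destruct HE as [<-|HE]; [contradiction | auto].
Qed.

Lemma supported_enum l :
  exists fs : list (form -> bool), forall s, supported l s -> In s fs.
Proof.
  induction l as [|D l [fs Hfs]].
  - exists [fun _ => false]; intros s Hs; left.
    apply functional_extensionality; intro E; symmetry; now apply Hs.
  - exists (map (fun f => upd f D true) fs ++ map (fun f => upd f D false) fs).
    intros s Hs; apply in_app_iff.
    assert (Hs' : supported l (upd s D false)).
    { intros E HE; unfold upd; destruct (form_eq_dec E D); auto.
      apply Hs; intros [->|]; auto. }
    assert (Es : s = upd (upd s D false) D (s D)).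
    { apply functional_extensionality; intro E; unfold upd.
      now destruct (form_eq_dec E D) as [->|]. }
    rewrite Es; destruct (s D); [left|right];
      apply (in_map (fun f => upd f D _)), Hfs, Hs'.
Qed.

Lemma sig_finite (T : Type) (P : T -> Prop) (xs : list T) :
  (forall x, P x -> In x xs) -> exists ys : list {x | P x}, forall y, In y ys.
Proof.
  intros Hxs.
  enough (H : forall xs', exists ys : list {x | P x},
             forall y, In (proj1_sig y) xs' -> In y ys).
  { destruct (H xs) as [ys Hys]; exists ys; intros [x Hx]; apply Hys, Hxs, Hx. }
  induction xs' as [|a xs' [ys Hys]].
  - now exists [].
  - destruct (classic (P a)) as [Ha|Ha]; [exists (exist P a Ha :: ys) | exists ys];
      intros [x Hx] [Hxa|Hx']; simpl in *; subst; auto.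
    + left; f_equal; apply proof_irrelevance.
    + contradiction.
Qed.

Fixpoint sub (A : form) : list form :=
  match A with
  | Var n => [Var n]
  | Bot => [Bot]
  | Imp B C => Imp B C :: sub B ++ sub C
  | Box B => Box B :: sub B
  end.

Lemma sub_refl A : In A (sub A).
Proof. destruct A; simpl; auto. Qed.

Definition subformula_closed (l : list form) : Prop :=
  (forall B C, In (Imp B C) l -> In B l /\ In C l) /\
  (forall B, In (Box B) l -> In B l).

Lemma sub_closed A : subformula_closed (sub A).
Proof.
  split.
  - induction A as [| |A1 IH1 A2 IH2|A IH]; simpl; intros B C H;
      try (destruct H as [H|[]]; discriminate).
    + rewrite !in_app_iff.
      destruct H as [H|H]; [injection H as -> ->; auto using sub_refl|].
      rewrite in_app_iff in H; destruct H as [H|H];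
        [destruct (IH1 _ _ H) | destruct (IH2 _ _ H)]; auto.
    + destruct H as [H|H]; [discriminate|]; destruct (IH _ _ H); auto.
  - induction A as [| |A1 IH1 A2 IH2|A IH]; simpl; intros B H;
      try (destruct H as [H|[]]; discriminate).
    + destruct H as [H|H]; [discriminate|].
      rewrite in_app_iff in *; destruct H; auto.
    + destruct H as [H|H]; [injection H as ->; auto using sub_refl | auto].
Qed.

Section Canonical.

Variables (L : logic) (l : list form).
Hypothesis l_closed : subformula_closed l.

Definition atom : Type := {s | supported l s /\ consistent L (chi s l)}.

Definition val (G : atom) : form -> bool := proj1_sig G.

Lemma atom_exists P :
  consistent L P -> exists (G : atom) v, agrees v (val G) l /\ beval v P = true.
Proof.
  intros HP; destruct (lindenbaum L l P HP) as [s [Hs Hc]].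
  assert (Hcs : consistent L (chi s l))
    by (revert Hc; apply consistent_weaken; beval_tauto).
  exists (exist _ s (conj Hs Hcs)).
  destruct (consistent_sat L _ _ Hc (prov_Top L)) as [v [Hv _]].
  rewrite beval_And, andb_true_iff, beval_chi in Hv; now exists v.
Qed.

(* A semantic rendering of derivability: [G] proves [R] in [L] when
   [chi G -> T -> R] is a tautology for some theorem [T]. *)
Definition entails (G : atom) (R : form) : Prop :=
  exists T, prov L T /\
    forall v, agrees v (val G) l -> beval v T = true -> beval v R = true.

Lemma entails_sat G R :
  entails G R -> exists v, agrees v (val G) l /\ beval v R = true.
Proof.
  intros [T [HT HTR]].
  destruct (consistent_sat L _ _ (proj2 (proj2_sig G)) HT) as [v [Hv HvT]].
  apply beval_chi in Hv; eauto.
Qed.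

Lemma entails_prov G R : prov L R -> entails G R.
Proof. intros HR; exists R; auto. Qed.

Lemma entails_val G D : In D l -> val G D = true -> entails G D.
Proof.
  intros HD HGD; exists Top; split; [apply prov_Top|].
  intros v Hv _; now rewrite Hv.
Qed.

Lemma entails_combine G R1 R2 R :
  (forall v, beval v R1 = true -> beval v R2 = true -> beval v R = true) ->
  entails G R1 -> entails G R2 -> entails G R.
Proof.
  intros H [T1 [HT1 H1]] [T2 [HT2 H2]].
  exists (And T1 T2); split; [now apply prov_and|].
  intros v Hv; rewrite beval_And, andb_true_iff; intros []; auto.
Qed.

Lemma entails_in_val G D : In D l -> entails G D -> val G D = true.
Proof.
  intros HD HGD; destruct (entails_sat G D HGD) as [v [Hv HvD]].
  now rewrite <- Hv.
Qed.

Lemma not_entails_Bot G : ~ entails G Bot.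
Proof. intros H; now destruct (entails_sat G Bot H) as [v [_ HvB]]. Qed.

Lemma val_Bot G : In Bot l -> val G Bot = false.
Proof.
  intros HB; destruct (val G Bot) eqn:E; auto.
  exfalso; now apply (not_entails_Bot G), entails_val.
Qed.

Lemma val_Imp G B C :
  In (Imp B C) l -> val G (Imp B C) = implb (val G B) (val G C).
Proof.
  intros HBC; destruct (proj1 l_closed B C HBC) as [HB HC].
  destruct (entails_sat G Top (entails_prov G Top (prov_Top L))) as [v [Hv _]].
  rewrite <- !Hv by assumption; simpl; now destruct (beval v B).
Qed.

Definition requires (G : atom) (P : form) : Prop :=
  exists C, In (Box C) l /\ val G (Box C) = true /\
    (P = C \/ hasF L = true /\ P = Box C).

Lemma requires_in G P : requires G P -> In P l.
Proof. intros [C [HC [_ [->|[_ ->]]]]]; auto; now apply (proj2 l_closed). Qed.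

Lemma requires_entails_box G P : requires G P -> entails G (Box P).
Proof.
  intros [C [HC [HGC [->|[HF ->]]]]]; [now apply entails_val|].
  apply (entails_combine G (Box C) (Imp (Box C) (Box (Box C)))); [beval_tauto| |].
  - now apply entails_val.
  - now apply entails_prov, ax_F.
Qed.

Lemma requires_mono G P R : requires G P -> prov L (Imp P R) -> entails G (Box R).
Proof.
  intros HP HPR; apply (entails_combine G (Box P) (Imp (Box P) (Box R)));
    [beval_tauto | now apply requires_entails_box | now apply entails_prov, r_rm].
Qed.

Definition canon_nbh (G : atom) (X : atom -> Prop) : Prop :=
  (exists y, X y) /\ forall P, requires G P -> exists y, X y /\ val y P = true.

Lemma canon_nbh_mono G (X Y : atom -> Prop) :
  canon_nbh G X -> (forall y, X y -> Y y) -> canon_nbh G Y.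
Proof.
  intros [[y Hy] HX] HXY; split; [eauto|].
  intros P HP; destruct (HX P HP) as [z [Hz HzP]]; eauto.
Qed.

Definition canon (G0 : atom) : MNframe :=
  {| world := atom;
     nbh := canon_nbh;
     world_nonempty := ex_intro _ G0 I;
     nbh_nonempty := fun G X HX => proj1 HX;
     nbh_mono := canon_nbh_mono |}.

Definition canon_val (n : nat) (G : atom) : Prop := val G (Var n) = true.

Lemma canon_nbh_refutes G D :
  In (Box D) l -> val G (Box D) = false -> canon_nbh G (fun y => val y D = false).
Proof.
  intros HBD HGD; assert (HD := proj2 l_closed D HBD).
  assert (Hne : forall Q, entails G (Box Q) -> prov L (Imp Q D) -> False).
  { intros Q HQ HQD; enough (val G (Box D) = true) by congruence.
    apply entails_in_val; auto.
    apply (entails_combine G (Box Q) (Imp (Box Q) (Box D)));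
      [beval_tauto | exact HQ | now apply entails_prov, r_rm]. }
  split.
  - destruct (atom_exists (Neg D)) as [y [v [Hv HvD]]].
    + intros H; apply (Hne Top); [now apply entails_prov, r_nec, prov_Top|].
      revert H; apply prov_taut_mp; beval_tauto.
    + exists y; rewrite <- Hv by exact HD; revert HvD; beval_tauto.
  - intros P HP; destruct (atom_exists (And P (Neg D))) as [y [v [Hv HvPD]]].
    + intros H; apply (Hne P); [now apply requires_entails_box|].
      revert H; apply prov_taut_mp; beval_tauto.
    + exists y; simpl; rewrite <- !Hv by eauto using requires_in.
      revert HvPD; beval_tauto.
Qed.

Lemma canon_truth G0 D :
  In D l -> forall G, forces (canon G0) canon_val G D <-> val G D = true.
Proof.
  induction D as [n| |B IHB C IHC|D IHD]; intros HD G; simpl.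
  - reflexivity.
  - rewrite val_Bot by exact HD; intuition discriminate.
  - destruct (proj1 l_closed B C HD) as [HB HC].
    rewrite val_Imp, IHB, IHC by assumption.
    destruct (val G B), (val G C); simpl; intuition discriminate.
  - assert (HD' := proj2 l_closed D HD); split.
    + intros Hbox; destruct (val G (Box D)) eqn:E; auto.
      destruct (Hbox _ (canon_nbh_refutes G D HD E)) as [y [Hy HyD]].
      apply IHD in HyD; congruence.
    + intros HGD V [_ HV]; destruct (HV D) as [y [Hy HyD]].
      * exists D; auto.
      * exists y; split; [exact Hy | now apply IHD].
Qed.

Lemma canon_transitive G0 : hasF L = true -> transitive_frame (canon G0).
Proof.
  intros HF x V U [[y0 Hy0] HV] HU; simpl in *; split.
  - destruct (HU y0 Hy0) as [[z Hz] _]; eauto.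
  - intros P [C [HC [HxC HP]]].
    destruct (HV (Box C)) as [y [Hy HyC]]; [exists C; auto|].
    destruct (proj2 (HU y Hy) P) as [z [Hz HzP]]; [exists C; auto|].
    eauto.
Qed.

Lemma requires_consistent G P : hasP L = true -> requires G P -> consistent L P.
Proof.
  intros Hl HP H; apply (not_entails_Bot G).
  apply (entails_combine G (Box Bot) (Neg (Box Bot)));
    [beval_tauto | now apply (requires_mono G P) | now apply entails_prov, ax_P].
Qed.

Lemma canon_serial G0 : hasP L = true -> serial_frame (canon G0).
Proof.
  intros Hl G; exists (fun _ => True); split; [now exists G|].
  intros P HP.
  destruct (atom_exists P (requires_consistent G P Hl HP)) as [y [v [Hv HvP]]].
  exists y; split; [exact I|].
  now rewrite <- (Hv P (requires_in G P HP)).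
Qed.

Lemma requires_jointly_consistent G P Q :
  hasD L = true -> requires G P -> requires G Q -> consistent L (And P Q).
Proof.
  intros Hl HP HQ H; apply (not_entails_Bot G).
  apply (entails_combine G (And (Box Q) (Box (Neg Q)))
           (Neg (And (Box Q) (Box (Neg Q)))));
    [beval_tauto | | now apply entails_prov, ax_D].
  apply (entails_combine G (Box Q) (Box (Neg Q)));
    [beval_tauto | now apply requires_entails_box |].
  apply (requires_mono G P); [exact HP|].
  revert H; apply prov_taut_mp; beval_tauto.
Qed.

Lemma canon_D G0 : hasD L = true -> D_frame (canon G0).
Proof.
  intros Hl G V; simpl.
  assert (Hmeet : forall P Q, requires G P -> requires G Q ->
                    exists y, val y P = true /\ val y Q = true).
  { intros P Q HP HQ.
    destruct (atom_exists _ (requires_jointly_consistent G P Q Hl HP HQ))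
      as [y [v [Hv HvPQ]]].
    rewrite beval_And, andb_true_iff in HvPQ; exists y.
    now rewrite <- !Hv by eauto using requires_in. }
  (* If V is not a neighbourhood, it misses all atoms meeting some requirement
     P; the atoms meeting P and any other requirement then show that the
     complement of V is one. *)
  destruct (classic (canon_nbh G V)) as [HV|HV]; [now left | right].
  destruct (classic (exists y, V y)) as [Hne|Hempty].
  - assert (HP : exists P, requires G P /\ forall y, V y -> val y P <> true).
    { apply NNPP; intro Hno; apply HV; split; [exact Hne|].
      intros P HP; apply NNPP; intro Hy; apply Hno.
      exists P; split; [exact HP|]; intros y Hy' HyP; apply Hy; eauto. }
    destruct HP as [P [HP HVP]]; split.
    + destruct (Hmeet P P HP HP) as [y [HyP _]].
      exists y; intro Hy; exact (HVP y Hy HyP).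
    + intros Q HQ; destruct (Hmeet P Q HP HQ) as [y [HyP HyQ]].
      exists y; split; [intro Hy; exact (HVP y Hy HyP) | exact HyQ].
  - split; [exists G; intro; apply Hempty; eauto|].
    intros Q HQ; destruct (Hmeet Q Q HQ HQ) as [y [HyQ _]].
    exists y; split; [intro; apply Hempty; eauto | exact HyQ].
Qed.

Lemma canon_finite G0 : finite_frame (canon G0).
Proof.
  destruct (supported_enum l) as [fs Hfs].
  apply (sig_finite _ _ fs); intros s [Hs _]; auto.
Qed.

End Canonical.

Lemma completeness L A :
  (forall F, is_L_frame L F -> finite_frame F -> valid_in F A) -> prov L A.
Proof.
  intros Hvalid; apply NNPP; intro HA.
  assert (Hcl := sub_closed A).
  assert (HnA : consistent L (Neg A))
    by (intro H; apply HA; revert H; apply prov_taut_mp; beval_tauto).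
  destruct (atom_exists L (sub A) _ HnA) as [G [v [Hv HvA]]].
  assert (HGA : val L (sub A) G A = false)
    by (rewrite <- Hv by apply sub_refl; revert HvA; beval_tauto).
  assert (HL : is_L_frame L (canon L (sub A) G)).
  { split; [|split]; intro;
      [apply canon_serial | apply canon_D | apply canon_transitive]; auto. }
  specialize (Hvalid _ HL (canon_finite L (sub A) G) (canon_val L (sub A)) G).
  apply canon_truth in Hvalid; [congruence | exact Hcl | apply sub_refl].
Qed.

Theorem theorem3p5 : forall (L : logic) (A : form),
  (prov L A <-> (forall F : MNframe, is_L_frame L F -> valid_in F A)) /\
  ((forall F : MNframe, is_L_frame L F -> valid_in F A) <->
   (forall F : MNframe, is_L_frame L F -> finite_frame F -> valid_in F A)).
Proof.
  intros L A; split; split.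
  - apply soundness.
  - intros H; apply completeness; auto.
  - auto.
  - intros H; apply soundness, completeness, H.
Qed.
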